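(* Let $D\ge1$ and let $\mathcal{F}$ be a collection of pairwise non-overlapping $D$-simplices on $\gamma_D$ whose vertex sets have union exactly a set of $n$ points, and suppose $\mathcal{F}$ is non-extendable. Then there is a collection $\mathcal{F}'$ of pairwise non-overlapping $(D+1)$-simplices on $\gamma_{D+1}$ whose vertex sets have union a set of exactly $n+1$ points of $\gamma_{D+1}$, such that $\mathcal{F}'$ is non-extendable.
   Context: $\gamma_D=\{(t,t^2,\dots,t^D):t\in\mathbb{R}\}$. A $D$-simplex on $\gamma_D$ is $\mathrm{conv}(\sigma)$ for $\sigma\subseteq\gamma_D$, $|\sigma|=D+1$. Simplices overlap if $\mathrm{conv}(\sigma)\cap\mathrm{conv}(\tau)\supsetneq\mathrm{conv}(\sigma\cap\tau)$. A collection of simplices on $\gamma_D$ whose vertex sets have union $A$ is non-extendable if there is no triangulation of $\mathrm{conv}(A)$ all of whose vertices lie in $A$ and which contains every simplex of the collection. *)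

From HB Require Import structures.
From mathcomp Require Import all_boot all_order all_algebra.
From mathcomp Require Import finmap.
From mathcomp Require Import reals.
Unset Printing Implicit Defensive.
Import Order.TTheory GRing.Theory Num.Theory.
Local Open Scope ring_scope.
Local Open Scope fset_scope.

(* The point (t, t^2, ..., t^D) of the moment curve gamma_D, in R^D. *)
Definition mpt {R : realType} (D : nat) (t : R) : 'rV[R]_D :=
  \row_(i < D) t ^+ i.+1.

(* A finite set of points on gamma_D is given by its finite set of parameters
   S : {fset R}; x lies in conv of the corresponding points. *)
Definition in_conv {R : realType} (D : nat) (S : {fset R}) (x : 'rV[R]_D) : Prop :=
  exists lam : R -> R,
    (forall t, t \in S -> 0 <= lam t) /\
    \sum_(t <- enum_fset S) lam t = 1 /\
    x = \sum_(t <- enum_fset S) lam t *: mpt D t.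

Definition is_simplex {R : realType} (D : nat) (s : {fset R}) : Prop :=
  #|` s| = D.+1.

Definition overlap {R : realType} (D : nat) (s t : {fset R}) : Prop :=
  (forall x, in_conv D (s `&` t) x -> in_conv D s x /\ in_conv D t x) /\
  (exists x, in_conv D s x /\ in_conv D t x /\ ~ in_conv D (s `&` t) x).

Definition pairwise_nonoverlapping {R : realType} (D : nat) (F : {fset {fset R}}) : Prop :=
  forall s t, s \in F -> t \in F -> ~ overlap D s t.

Definition vertex_union {R : realType} (F : {fset {fset R}}) (A : {fset R}) : Prop :=
  forall t, t \in A <-> exists2 s, s \in F & t \in s.

Definition triangulation {R : realType} (D : nat) (A : {fset R}) (T : {fset {fset R}}) : Prop :=
  (forall s, s \in T -> is_simplex D s /\ s `<=` A) /\
  pairwise_nonoverlapping D T /\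
  (forall x, in_conv D A x <-> exists2 s, s \in T & in_conv D s x).

Definition non_extendable {R : realType} (D : nat) (F : {fset {fset R}}) (A : {fset R}) : Prop :=
  ~ exists T : {fset {fset R}}, triangulation D A T /\ F `<=` T.

From HB Require Import structures.
From mathcomp Require Import all_boot all_order all_algebra.
From mathcomp Require Import finmap.
From mathcomp Require Import reals.
From mathcomp Require Import ring lra.
Import Order.TTheory GRing.Theory Num.Theory.
Local Open Scope fset_scope.
Local Open Scope ring_scope.

(* Cone every simplex of F over an apex a of the moment curve lying to the
   right of A (at distance at least 1). Central projection from
   gamma_(D+1)(a) sends the weights mu of a point of conv({a} ∪ s) to
   mu(u) (a - u), whose moments are a m_k - m_(k+1); up to normalisation this
   is a point of conv(s), and every point x of conv(s) has an explicit lift in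
   conv({a} ∪ s) with mass 1/2 at a that projects back to x. Lifting shows that
   overlapping simplices have overlapping cones; projecting, together with the
   uniqueness of barycentric coordinates for at most D+1 points of gamma_D,
   shows the converse. Finally a triangulation of conv({a} ∪ A) containing the
   cones restricts, through the link of a, to a triangulation of conv(A)
   containing F. *)

Section Moments.
Context {R : realType}.
Implicit Types (S T I : {fset R}) (lam mu : R -> R).

Definition mom S lam k : R := \sum_(u <- S) lam u * u ^+ k.

Definition conv_weights D S (x : 'rV[R]_D) lam : Prop :=
  [/\ {in S, forall u, 0 <= lam u}, mom S lam 0 = 1 &
      forall j : 'I_D, x 0 j = mom S lam j.+1].

Lemma in_convP D S x : in_conv D S x <-> exists lam, conv_weights D S x lam.
Proof.
have mom0 lam : mom S lam 0 = \sum_(u <- S) lam u.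
  by apply: eq_bigr => u _; rewrite mulr1.
have momE lam j : (\sum_(u <- S) lam u *: mpt D u) 0 j = mom S lam j.+1.
  by rewrite summxE; apply: eq_bigr => u _; rewrite !mxE.
split=> [[lam [lam0 [lam1 ->]]] | [lam [lam0 lam1 xE]]]; exists lam.
  by split; rewrite ?mom0.
by do !split; rewrite -?mom0 //; apply/rowP => j; rewrite xE momE.
Qed.

Lemma mom_fsubset S T lam k :
  S `<=` T -> {in T, forall u, u \notin S -> lam u = 0} ->
  mom S lam k = mom T lam k.
Proof.
by move=> ST lam0; apply: big_fset_incl => // u uT /(lam0 u uT) ->; rewrite mul0r.
Qed.

Lemma mom_extend0 I S lam k :
  I `<=` S -> mom S (fun u => if u \in I then lam u else 0) k = mom I lam k.
Proof.
move=> IS; rewrite -(@mom_fsubset I) // => [|u _ /negbTE -> //].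
by apply: eq_big_seq => u uI; rewrite uI.
Qed.

Lemma mom_fsetU1 a S lam k :
  a \notin S -> mom (a |` S) lam k = lam a * a ^+ k + mom S lam k.
Proof. exact: big_fsetU1. Qed.

Lemma mom_fsetD1 a S lam k : lam a = 0 -> mom (S `\ a) lam k = mom S lam k.
Proof.
move=> lama; apply: mom_fsubset; first exact: fsubsetDl.
by move=> u uS; rewrite in_fsetD1 uS andbT negbK => /eqP ->.
Qed.

Lemma momB S lam mu k :
  mom S (fun u => lam u - mu u) k = mom S lam k - mom S mu k.
Proof. by rewrite /mom -sumrB; apply: eq_bigr => u _; rewrite mulrBl. Qed.

Lemma momZ S lam c k : mom S (fun u => c * lam u) k = c * mom S lam k.
Proof. by rewrite /mom mulr_sumr; apply: eq_bigr => u _; rewrite mulrA. Qed.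

Lemma mom_ge0 S lam k :
  {in S, forall u, 0 <= lam u * u ^+ k} -> 0 <= mom S lam k.
Proof. by move=> h; rewrite /mom big_seq sumr_ge0. Qed.

Lemma mom0_eq0 S lam :
  {in S, forall u, 0 <= lam u} -> mom S lam 0 = 0 -> {in S, forall u, lam u = 0}.
Proof.
move=> lam0 /eqP; rewrite /mom big_seq psumr_eq0 => [/allP lam_eq0 u uS|u uS].
  by have /implyP/(_ uS) := lam_eq0 u uS; rewrite expr0 mulr1 => /eqP.
by rewrite expr0 mulr1 lam0.
Qed.

Lemma in_conv_fsubset D S T x : S `<=` T -> in_conv D S x -> in_conv D T x.
Proof.
move=> ST /in_convP [lam [lam0 lam1 xE]]; apply/in_convP.
exists (fun u => if u \in S then lam u else 0).
split=> [u _ | | j]; rewrite ?mom_extend0 //.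
by case: ifP => // /lam0.
Qed.

Lemma in_conv_fsetI D S T x :
  in_conv D (S `&` T) x -> in_conv D S x /\ in_conv D T x.
Proof.
by move=> x_in; split; apply: in_conv_fsubset x_in; rewrite ?fsubsetIl ?fsubsetIr.
Qed.

Lemma conv_weights_same_mom {D S T x lam mu} :
  conv_weights D S x lam -> conv_weights D T x mu ->
  forall i, (i <= D)%N -> mom S lam i = mom T mu i.
Proof.
move=> [_ lam1 lamx] [_ mu1 mux] [|i] iD; first by rewrite lam1 mu1.
by rewrite -(lamx (Ordinal iD)) -(mux (Ordinal iD)).
Qed.

Lemma conv_weights_of_mom {D S T x lam mu} :
  conv_weights D S x lam -> {in T, forall u, 0 <= mu u} ->
  (forall i, (i <= D)%N -> mom T mu i = mom S lam i) -> conv_weights D T x mu.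
Proof.
move=> [_ lam1 lamx] mu0 momE; split=> [//||j]; first by rewrite momE.
by rewrite momE ?lamx.
Qed.

(* Affine independence of points of the moment curve: pair lam with the
   polynomial of degree <= D vanishing on S except at u. *)
Lemma mom_vanish D S lam :
  (#|` S| <= D.+1)%N -> (forall i, (i <= D)%N -> mom S lam i = 0) ->
  {in S, forall u, lam u = 0}.
Proof.
move=> cardS mom0 u uS.
pose P := \prod_(v <- S `\ u) ('X - v%:P).
have sizeP : (size P <= D.+1)%N.
  by rewrite size_prod_XsubC; move: cardS; rewrite (cardfsD1 u) uS.
have : \sum_(v <- S) lam v * P.[v] = 0.
  under eq_bigr do rewrite (horner_coef_wide _ sizeP) mulr_sumr.
  rewrite exchange_big big1 //= => i _.
  under eq_bigr do rewrite mulrCA.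
  by rewrite -mulr_sumr -/(mom S lam i) mom0 ?mulr0 // -ltnS.
rewrite (big_fsetD1 _ uS) /= big1_fset ?addr0 => [/eqP|v vS _]; last first.
  have /rootP -> : root P v by rewrite root_prod_XsubC.
  by rewrite mulr0.
by rewrite mulf_eq0 -/(root P u) root_prod_XsubC in_fsetD1 eqxx orbF => /eqP.
Qed.

Lemma conv_weights_uniq {D S I x lam mu} :
  (#|` S| <= D.+1)%N -> I `<=` S ->
  conv_weights D S x lam -> conv_weights D I x mu ->
  {in S, forall u, u \notin I -> lam u = 0}.
Proof.
move=> cardS IS hlam hmu u uS uI.
pose muS v := if v \in I then mu v else 0.
have := @mom_vanish D S (fun v => lam v - muS v) cardS _ u uS.
rewrite /muS (negbTE uI) subr0; apply=> i iD.
by rewrite momB mom_extend0 // (conv_weights_same_mom hlam hmu) ?subrr.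
Qed.

Lemma in_conv_fsetI_vanish {D S T y lam} :
  conv_weights D S y lam -> {in S, forall u, u \notin T -> lam u = 0} ->
  in_conv D (S `&` T) y.
Proof.
move=> [lam0 lam1 lamy] lamT; apply/in_convP; exists lam.
have momE k : mom (S `&` T) lam k = mom S lam k.
  apply: mom_fsubset; first exact: fsubsetIl.
  by move=> u uS; rewrite in_fsetI uS; apply: lamT.
split=> [u | | j]; rewrite ?momE //.
by rewrite in_fsetI => /andP [/lam0].
Qed.

Definition barycenter D S lam : 'rV[R]_D :=
  \row_(j < D) (mom S lam j.+1 / mom S lam 0).

Lemma conv_weights_barycenter D {S lam} :
  {in S, forall u, 0 <= lam u} -> 0 < mom S lam 0 ->
  conv_weights D S (barycenter D S lam) (fun u => (mom S lam 0)^-1 * lam u).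
Proof.
move=> lam0 c0; split=> [u uS | | j]; rewrite ?momZ ?mxE 1?mulrC //.
  by rewrite mulr_ge0 ?lam0 ?invr_ge0 ?ltW.
by rewrite divff ?gt_eqF.
Qed.

End Moments.

Section Apex.
Context {R : realType} (a : R).
Implicit Types (A S s t : {fset R}) (F T : {fset {fset R}}).
Implicit Types (lam mu : R -> R) (m : nat -> R).

Lemma apex_notin {s} : {in s, forall u, u + 1 <= a} -> a \notin s.
Proof. by move=> s_a; apply/negP => /s_a; lra. Qed.

(* Central projection from gamma_(D+1)(a), at the level of weights. *)
Definition proj_weights mu u := mu u * (a - u).

Lemma proj_weights_ge0 mu u : u <= a -> 0 <= mu u -> 0 <= proj_weights mu u.
Proof. by move=> ua mu0; rewrite mulr_ge0 // subr_ge0. Qed.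

Lemma mom_proj S mu k : mom S (proj_weights mu) k = a * mom S mu k - mom S mu k.+1.
Proof.
rewrite /mom mulr_sumr -sumrB; apply: eq_bigr => u _.
by rewrite /proj_weights exprS; ring.
Qed.

Lemma mom_proj_fsetU1 S mu k :
  a \notin S -> mom (a |` S) (proj_weights mu) k = mom S (proj_weights mu) k.
Proof. by move=> aS; rewrite mom_fsetU1 // /proj_weights subrr mulr0 mul0r add0r. Qed.

(* The moments Y of the lift of a point with moments m solve
   a Y_k - Y_(k+1) = m_k / 2 with Y_0 = 1 (see mom_proj). *)
Fixpoint lift_mom m k : R := if k is k'.+1 then a * lift_mom m k' - m k' / 2 else 1.

Lemma lift_mom_eq m m' k :
  (forall i, (i < k)%N -> m i = m' i) -> lift_mom m k = lift_mom m' k.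
Proof. by elim: k => //= k IH eqm; rewrite IH ?eqm // => i /ltnW /eqm. Qed.

Definition lift_pt D m : 'rV[R]_D.+1 := \row_(j < D.+1) lift_mom m j.+1.

Lemma lift_pt_eq D m m' :
  (forall i, (i <= D)%N -> m i = m' i) -> lift_pt D m = lift_pt D m'.
Proof.
move=> eqm; apply/rowP => j; rewrite !mxE; apply: lift_mom_eq => i ij.
by apply: eqm; rewrite -ltnS (leq_trans ij) ?ltn_ord.
Qed.

(* Chosen so that proj_weights (lift_weights s lam) = lam / 2 on s; as a - u >= 1
   on s, these weights add up to at most 1/2, leaving a nonnegative weight at a. *)
Definition lift_weights s lam u : R :=
  if u \in s then lam u / (2 * (a - u))
  else 1 - \sum_(v <- s) lam v / (2 * (a - v)).

Lemma conv_weights_lift {D s x lam} :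
  {in s, forall u, u + 1 <= a} -> conv_weights D s x lam ->
  conv_weights D.+1 (a |` s) (lift_pt D (mom s lam)) (lift_weights s lam).
Proof.
move=> s_a [lam0 lam1 _]; have a_s := apex_notin s_a.
set w := lift_weights s lam.
have w_s u : u \in s -> w u = lam u / (2 * (a - u)) by rewrite /w /lift_weights => ->.
have w_a : w a = 1 - \sum_(v <- s) lam v / (2 * (a - v)).
  by rewrite /w /lift_weights (negbTE a_s).
have proj_w k : mom (a |` s) (proj_weights w) k = 2^-1 * mom s lam k.
  rewrite mom_proj_fsetU1 // -momZ; apply: eq_big_seq => u us.
  rewrite /proj_weights w_s //; have := s_a u us => ua.
  by congr (_ * _); field; lra.
have mom_w k : mom (a |` s) w k = lift_mom (mom s lam) k.
  elim: k => [|k IH] /=.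
    rewrite mom_fsetU1 // w_a expr0 mulr1 /mom.
    have -> : \sum_(u <- s) w u * u ^+ 0 = \sum_(v <- s) lam v / (2 * (a - v)).
      by apply: eq_big_seq => u us; rewrite expr0 mulr1 w_s.
    by rewrite subrK.
  by move: (mom_proj (a |` s) w k); rewrite proj_w IH; lra.
split=> [u | | j]; rewrite ?mom_w ?mxE //.
rewrite in_fset1U => /orP [/eqP -> | us]; last first.
  by rewrite w_s // divr_ge0 ?lam0 //; have := s_a u us; lra.
rewrite w_a subr_ge0; apply: le_trans (_ : 2^-1 * mom s lam 0 <= 1); last first.
  by rewrite lam1; lra.
rewrite -momZ /mom big_seq [leRHS]big_seq; apply: ler_sum => v vs.
rewrite expr0 mulr1 invfM mulrA mulrC ler_pdivrMl; last by have := s_a v vs; lra.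
by have := lam0 v vs; have := s_a v vs; nra.
Qed.

Lemma conv_weights_proj {D S s x lam mu} :
  {in S, forall u, u <= a} -> conv_weights D s x lam ->
  conv_weights D.+1 S (lift_pt D (mom s lam)) mu ->
  conv_weights D (S `\ a) x (fun u => 2 * proj_weights mu u).
Proof.
move=> S_a hlam [mu0 mu1 muy].
have mom_mu k : (k <= D.+1)%N -> mom S mu k = lift_mom (mom s lam) k.
  by case: k => [|k] kD; rewrite ?mu1 // -(muy (Ordinal kD)) mxE.
apply: (conv_weights_of_mom hlam) => [u | i iD].
  rewrite in_fsetD1 => /andP [_ uS].
  by rewrite mulr_ge0 // proj_weights_ge0 ?S_a ?mu0.
rewrite mom_fsetD1 /proj_weights ?subrr ?mulr0 // momZ.
by rewrite -/(proj_weights mu) mom_proj !mom_mu //=; [lra | exact: ltnW].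
Qed.

Lemma lift_pt_notin_conv {D S m mu} :
  {in S, forall u, u + 1 <= a} -> m 0%N = 1 -> ~ conv_weights D.+1 S (lift_pt D m) mu.
Proof.
move=> S_a m0 [mu0 mu1 muy].
have : mom S mu 1 <= (a - 1) * mom S mu 0.
  rewrite /mom mulr_sumr big_seq [leRHS]big_seq; apply: ler_sum => u uS.
  by have := mu0 u uS; have := S_a u uS; rewrite expr1 expr0; nra.
by have := muy ord0; rewrite mxE /= m0 mu1; lra.
Qed.

Lemma overlap_cone {D s t} :
  {in s, forall u, u + 1 <= a} -> {in t, forall u, u + 1 <= a} ->
  overlap D s t -> overlap D.+1 (a |` s) (a |` t).
Proof.
move=> s_a t_a [_ [x [/in_convP [lam hlam] [/in_convP [mu hmu] x_st]]]].
split=> [y|]; first exact: in_conv_fsetI.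
exists (lift_pt D (mom s lam)); split; [|split].
- by apply/in_convP; exists (lift_weights s lam); apply: conv_weights_lift s_a hlam.
- apply/in_convP; exists (lift_weights t mu).
  rewrite (@lift_pt_eq D _ (mom t mu)); first exact: conv_weights_lift t_a hmu.
  exact: conv_weights_same_mom hlam hmu.
- move=> /in_convP [nu hnu]; apply: x_st; apply/in_convP.
  exists (fun u => 2 * proj_weights nu u).
  have a_st : a \notin s `&` t by rewrite in_fsetI negb_and apex_notin.
  rewrite -[s `&` t](fsetU1K a_st) fsetUIr.
  apply: conv_weights_proj hlam hnu => u.
  by rewrite in_fsetI in_fset1U => /andP [/orP [/eqP -> // | /s_a ua] _]; lra.
Qed.

Lemma in_conv_cone_fsetI {D s t y mu} :
  {in s, forall u, u + 1 <= a} -> conv_weights D (a |` s) y mu ->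
  {in s, forall u, u \notin t -> proj_weights mu u = 0} ->
  in_conv D ((a |` s) `&` (a |` t)) y.
Proof.
move=> s_a hmu mu_st; apply: (in_conv_fsetI_vanish hmu) => u.
rewrite in_fset1U => /orP [/eqP -> | us]; first by rewrite fset1U1.
rewrite in_fset1U negb_or => /andP [_ /(mu_st u us) /eqP].
by rewrite mulf_eq0 => /orP [/eqP // | /eqP]; have := s_a u us; lra.
Qed.

Lemma overlap_of_cone {D s t} :
  {in s, forall u, u + 1 <= a} -> {in t, forall u, u + 1 <= a} ->
  (#|` s| <= D.+1)%N -> overlap D.+1 (a |` s) (a |` t) -> overlap D s t.
Proof.
move=> s_a t_a card_s [_ [y [/in_convP [mu hmu] [/in_convP [mu' hmu'] y_st]]]].
split=> [x|]; first exact: in_conv_fsetI.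
pose nu := proj_weights mu; pose nu' := proj_weights mu'.
have nu_mom i : (i <= D)%N -> mom s nu i = mom t nu' i.
  move=> iD; rewrite -(mom_proj_fsetU1 _ _ _ (apex_notin s_a)).
  rewrite -(mom_proj_fsetU1 _ _ _ (apex_notin t_a)) !mom_proj.
  by rewrite !(conv_weights_same_mom hmu hmu') // ltnW.
have [[mu0 _ _] [mu'0 _ _]] := (hmu, hmu').
have nu0 : {in s, forall u, 0 <= nu u}.
  by move=> u us; apply: proj_weights_ge0; [have := s_a u us; lra | apply/mu0/fset1Ur].
have nu'0 : {in t, forall u, 0 <= nu' u}.
  by move=> u ut; apply: proj_weights_ge0; [have := t_a u ut; lra | apply/mu'0/fset1Ur].
have [c0 | c_pos] : mom s nu 0 = 0 \/ 0 < mom s nu 0.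
  have : 0 <= mom s nu 0 by apply: mom_ge0 => u /nu0; rewrite expr0 mulr1.
  by rewrite le_eqVlt => /orP [/eqP <-|]; [left | right].
  by case: y_st; apply: in_conv_cone_fsetI s_a hmu _ => u us _; apply: mom0_eq0 c0 u us.
have hx_s := conv_weights_barycenter D nu0 c_pos.
have hx_t : conv_weights D t (barycenter D s nu) (fun u => (mom s nu 0)^-1 * nu' u).
  apply: (conv_weights_of_mom hx_s) => [u ut | i iD].
    by rewrite mulr_ge0 ?nu'0 // invr_ge0 ltW.
  by rewrite !momZ (nu_mom i iD).
exists (barycenter D s nu); split; first by apply/in_convP; eexists; exact: hx_s.
split; first by apply/in_convP; eexists; exact: hx_t.
move=> /in_convP [de hde]; apply: y_st; apply: in_conv_cone_fsetI s_a hmu _ => u us ut.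
have := conv_weights_uniq card_s (fsubsetIl s t) hx_s hde u us.
rewrite in_fsetI us ut => /(_ isT) /eqP.
by rewrite mulf_eq0 invr_eq0 gt_eqF //= => /eqP.
Qed.

Definition cone F : {fset {fset R}} := [fset a |` s | s in F].

Definition link T : {fset {fset R}} := [fset s `\ a | s in [fset s in T | a \in s]].

Lemma linkP T s :
  reflect (exists2 s', s' \in T & a \in s' /\ s = s' `\ a) (s \in link T).
Proof.
apply: (iffP idP) => [/imfsetP [s' /= s'T ->] | [s' s'T [a_s' ->]]].
  by move: s'T; rewrite !inE /= => /andP [s'T a_s']; exists s'.
by apply/imfsetP; exists s' => //; rewrite !inE /= s'T.
Qed.

Section Link.
Context {D : nat} {A : {fset R}} {T : {fset {fset R}}}.
Hypothesis A_a : {in A, forall u, u + 1 <= a}.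
Hypothesis T_simplex : forall s, s \in T -> is_simplex D.+1 s /\ s `<=` a |` A.

Lemma link_apex {s} : s \in T -> {in s `\ a, forall u, u + 1 <= a}.
Proof.
move=> sT u; rewrite in_fsetD1 => /andP [ua /(fsubsetP (T_simplex s sT).2)].
by rewrite in_fset1U (negbTE ua) => /A_a.
Qed.

Lemma link_simplex s : s \in link T -> is_simplex D s /\ s `<=` A.
Proof.
move=> /linkP [s' s'T [a_s' ->]]; have [card_s' s'_A] := T_simplex s' s'T.
split; first by move: card_s'; rewrite /is_simplex (cardfsD1 a) a_s' => -[].
apply/fsubsetP => u; rewrite in_fsetD1 => /andP [ua /(fsubsetP s'_A)].
by rewrite in_fset1U (negbTE ua).
Qed.

Lemma link_pairwise_nonoverlapping :
  pairwise_nonoverlapping D.+1 T -> pairwise_nonoverlapping D (link T).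
Proof.
move=> T_no _ _ /linkP [s s_T [a_s ->]] /linkP [t t_T [a_t ->]] st_ov.
apply: (T_no s t s_T t_T); rewrite -(fsetD1K a_s) -(fsetD1K a_t).
exact: overlap_cone (link_apex s_T) (link_apex t_T) st_ov.
Qed.

(* The lift of a point of conv(A) has first coordinate a - 1/2, so it can only
   lie in simplices of T having a as a vertex. *)
Lemma link_cover :
  (forall y, in_conv D.+1 (a |` A) y -> exists2 s, s \in T & in_conv D.+1 s y) ->
  forall x, in_conv D A x -> exists2 s, s \in link T & in_conv D s x.
Proof.
move=> T_cover x /in_convP [lam hlam].
have /T_cover [s sT /in_convP [mu hmu]] : in_conv D.+1 (a |` A) (lift_pt D (mom A lam)).
  by apply/in_convP; eexists; exact: conv_weights_lift A_a hlam.
have s_A := fsubsetP (T_simplex s sT).2.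
have [a_s | a_ns] := boolP (a \in s).
  exists (s `\ a); first by apply/linkP; exists s.
  apply/in_convP; eexists; apply: conv_weights_proj hlam hmu => u /s_A.
  by rewrite in_fset1U => /orP [/eqP -> // | /A_a]; lra.
case: (lift_pt_notin_conv _ _ hmu) => [u us | ]; last by case: hlam.
move: (s_A u us); rewrite in_fset1U => /orP [/eqP ua | /A_a //].
by move: us; rewrite ua (negbTE a_ns).
Qed.

End Link.

Lemma link_triangulation {D A T} :
  {in A, forall u, u + 1 <= a} ->
  triangulation D.+1 (a |` A) T -> triangulation D A (link T).
Proof.
move=> A_a [T_simplex [T_no T_cover]]; split; [|split].
- exact: link_simplex T_simplex.
- exact: link_pairwise_nonoverlapping A_a T_simplex T_no.
- move=> x; split; first exact: link_cover A_a T_simplex (fun y => (T_cover y).1) x.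
  by case=> s /(link_simplex T_simplex) [_ s_A]; apply: in_conv_fsubset.
Qed.

Lemma cone_simplex {D A F} :
  {in A, forall u, u + 1 <= a} -> (forall s, s \in F -> s `<=` A) ->
  (forall s, s \in F -> is_simplex D s) -> forall s, s \in cone F -> is_simplex D.+1 s.
Proof.
move=> A_a F_A F_simplex _ /imfsetP [s sF ->].
have s_a := sub_in1 (fsubsetP (F_A s sF)) A_a.
by rewrite /is_simplex cardfsU1 (apex_notin s_a) F_simplex.
Qed.

Lemma cone_pairwise_nonoverlapping {D A F} :
  {in A, forall u, u + 1 <= a} -> (forall s, s \in F -> s `<=` A) ->
  (forall s, s \in F -> is_simplex D s) ->
  pairwise_nonoverlapping D F -> pairwise_nonoverlapping D.+1 (cone F).
Proof.
move=> A_a F_A F_simplex F_no _ _ /imfsetP [s sF ->] /imfsetP [t tF ->] st_ov.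
have s_a := sub_in1 (fsubsetP (F_A s sF)) A_a.
have t_a := sub_in1 (fsubsetP (F_A t tF)) A_a.
apply: (F_no s t sF tF).
by apply: overlap_of_cone s_a t_a _ st_ov; rewrite F_simplex.
Qed.

Lemma vertex_union_cone {F A} :
  F != fset0 -> vertex_union F A -> vertex_union (cone F) (a |` A).
Proof.
move=> /fset0Pn [s0 s0F] F_A u; rewrite in_fset1U; split.
  case/orP => [/eqP -> | /F_A [s sF us]].
    by exists (a |` s0); [apply: in_imfset | apply: fset1U1].
  by exists (a |` s); [apply: in_imfset | apply: fset1Ur].
move=> [_ /imfsetP [s sF ->]]; rewrite in_fset1U => /orP [-> // | us].
by apply/orP; right; apply/F_A; exists s.
Qed.

Lemma cone_non_extendable {D F A} :
  {in A, forall u, u + 1 <= a} -> (forall s, s \in F -> s `<=` A) ->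
  non_extendable D F A -> non_extendable D.+1 (cone F) (a |` A).
Proof.
move=> A_a F_A F_ne [T [hT FT]]; apply: F_ne; exists (link T).
split; first exact: link_triangulation.
apply/fsubsetP => s sF; apply/linkP; exists (a |` s); last split.
- by apply: (fsubsetP FT); apply: in_imfset.
- exact: fset1U1.
- by rewrite fsetU1K // (apex_notin (sub_in1 (fsubsetP (F_A s sF)) A_a)).
Qed.

End Apex.

Lemma exists_apex {R : realType} (A : {fset R}) :
  exists a, {in A, forall u, u + 1 <= a}.
Proof.
exists (1 + \sum_(u <- A) `|u|) => u uA; rewrite addrC lerD2l.
rewrite (big_fsetD1 _ uA) /= -[leLHS]addr0 lerD ?ler_norm //.
by rewrite big_seq sumr_ge0.
Qed.

Lemma vertex_union_fsubset {R : realType} {F : {fset {fset R}}} {A} :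
  vertex_union F A -> forall s, s \in F -> s `<=` A.
Proof. by move=> F_A s sF; apply/fsubsetP => u us; apply/F_A; exists s. Qed.

Lemma triangulation_fset0 {R : realType} D : triangulation D (fset0 : {fset R}) fset0.
Proof.
split; first by move=> s; rewrite in_fset0.
split; first by move=> s t; rewrite in_fset0.
move=> x; split=> [/in_convP [lam [_ lam1 _]] | [s]]; last by rewrite in_fset0.
by move: lam1; rewrite /mom big_seq_fset0 => /eqP; rewrite eq_sym oner_eq0.
Qed.

Lemma non_extendable_neq0 {R : realType} {D} {F : {fset {fset R}}} {A} :
  vertex_union F A -> non_extendable D F A -> F != fset0.
Proof.
move=> F_A F_ne; apply/eqP => F0; apply: F_ne; exists fset0; split; last by rewrite F0.
have -> : A = fset0.
  by apply/fsetP => u; rewrite in_fset0; apply/negbTE/negP => /F_A [s]; rewrite F0.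
exact: triangulation_fset0.
Qed.

Theorem proposition4p3 (R : realType) (D n : nat) (F : {fset {fset R}}) (A : {fset R}) :
  (1 <= D)%N ->
  (forall s, s \in F -> is_simplex D s) ->
  pairwise_nonoverlapping D F ->
  vertex_union F A ->
  #|` A| = n ->
  non_extendable D F A ->
  exists (F' : {fset {fset R}}) (A' : {fset R}),
    (forall s, s \in F' -> is_simplex D.+1 s) /\
    pairwise_nonoverlapping D.+1 F' /\
    vertex_union F' A' /\
    #|` A'| = n.+1 /\
    non_extendable D.+1 F' A'.
Proof.
(* The construction works for every D, including D = 0. *)
move=> _ F_simplex F_no F_A card_A F_ne.
have F_sub := vertex_union_fsubset F_A.
have [a A_a] := exists_apex A.
exists (cone a F), (a |` A); split; [|split; [|split; [|split]]].
- exact: (cone_simplex a A_a F_sub F_simplex).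
- exact: (cone_pairwise_nonoverlapping a A_a F_sub F_simplex F_no).
- exact: (vertex_union_cone a (non_extendable_neq0 F_A F_ne) F_A).
- by rewrite cardfsU1 (apex_notin a A_a) card_A.
- exact: (cone_non_extendable a A_a F_sub F_ne).
Qed.
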